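(* Fix an execution path of naive-fvs$(G,k,\emptyset)$ that leads to a solution, with $V_-=\{x_1,\dots,x_s\}$, $F'$, $d^*$ and $\delta$ as defined in the context. For every $i\in\{1,\dots,s\}$, $\sum_{u\in F'}\delta(u,x_i)\le d^*(x_i)$.
   Context: All graphs are finite, simple and undirected; $d_G(v)$ denotes the degree of $v$ in $G$ (taken to be $0$ if $v\notin V(G)$), $G-S$ denotes deletion of a vertex set $S$, and $G[S]$ the induced subgraph. A feedback vertex set of $G$ is a set $V_-\subseteq V(G)$ such that $G-V_-$ is a forest. Algorithm naive-fvs$(G,k,F)$ (with $k$ an integer and $F\subseteq V(G)$ inducing a forest) returns a set of vertices or ``NO'' as follows (all choices among several candidates are arbitrary; degrees are in the current graph $G$): (0) If $k<0$ return NO; if $V(G)=\emptyset$ return $\emptyset$. (1) If some vertex $v$ has degree less than $2$, return naive-fvs$(G-\{v\},k,F\setminus\{v\})$. (2) If some $v\in V(G)\setminus F$ has two neighbors in the same connected component of $G[F]$, let $X=$ naive-fvs$(G-\{v\},k-1,F)$ and return $X\cup\{v\}$ (NO if $X$ is NO). (3) Pick $v\in V(G)\setminus F$ of maximum degree. (4) If $d(v)=2$: set $X=\emptyset$; while $G$ contains a cycle $C$, take any vertex $x$ of $C$ not in $F$, add $x$ to $X$ and delete $x$ from $G$; then return $X$ if $|X|\le k$, else NO. (5) Let $X=$ naive-fvs$(G-\{v\},k-1,F)$; if $X$ is not NO, return $X\cup\{v\}$. (6) Return naive-fvs$(G,k,F\cup\{v\})$. An execution path is a sequence of calls $c_0,c_1,\dots,c_t$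 where $c_0=$ naive-fvs$(G,k,\emptyset)$; for each $j<t$, $c_{j+1}$ is the recursive call made by $c_j$ in step 1 or step 2, or, if $c_j$ reaches step 5, either the call of step 5 or the call of step 6 (the latter considered even if the algorithm would not actually make it); and $c_t$ terminates in step 0 or step 4 without recursion. It leads to a solution if $c_t$ returns a set (not NO). Along the path, vertices are deleted from the current graph one at a time (in steps 1, 2, 5 and in the loop of step 4 of $c_t$). $V_-$ denotes the set of vertices deleted in step 2, in step 5 (when the path follows the step-5 call), and in the loop of step 4 of $c_t$; $F'$ denotes the set of vertices added to $F$ by step 6 (when the path follows the step-6 call). Let $x_1,\dots,x_s$ be the vertices of $V_-$ in the order they are deleted. For $v\in V_-\cup F'$, $d^*(v)$ is the degree of $v$ in the current graph at the moment $v$ is deleted (for $v\in V_-$) or moved into $F$ (for $v\in F'$). Let $G_i$ and $F_i$ be the current graph and current set $F$ immediately before $x_i$ is deleted, and let $G_{s+1}$ be the current graph at the end of the path. For $u\in F'$ and $1\le i\le s$, the number of effective decrements of $u$ incurred by $x_i$ is $\delta(u,x_i)=\max\{d_{G_i}(u),2\}-\max\{d_{G_{i+1}}(u),2\}$ if $u\in F_i$, and $\delta(u,x_i)=0$ otherwise. *)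

From HB Require Import structures.
From mathcomp Require Import all_boot all_order all_algebra.
Set Implicit Arguments. Unset Strict Implicit. Unset Printing Implicit Defensive.
Import Order.TTheory GRing.Theory Num.Theory.

(* A finite simple graph is given by a vertex set V : {set T} (T a finType)
   and a symmetric irreflexive edge relation e : rel T; the graph is the
   subgraph induced by e on V. *)

(* Ev1 v : step 1 deletes v;  Ev2 v : step 2 deletes v;
   Ev5 v : path follows the step-5 call, deleting v;
   Ev6 v : path follows the step-6 call, adding v to F;
   EvL v : v is deleted in the loop of step 4 of the last call c_t. *)
Inductive event (T : Type) := Ev1 of T | Ev2 of T | Ev5 of T | Ev6 of T | EvL of T.

(* Termination of the last call c_t: in step 0, or in step 4 with the
   sequence of vertices deleted by the loop. *)
Inductive terminal (T : Type) := Term0 | Term4 of seq T.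

(* Current arguments (G, k, F) of a call; G is given by its vertex set. *)
Record state (T : finType) := State { sV : {set T}; sk : int; sF : {set T} }.

Section FVS.
Variables (T : finType) (e : rel T).

(* degree in the current graph G[V]; 0 if v is not a vertex *)
Definition deg (V : {set T}) (v : T) : nat :=
  if v \in V then #|[set u in V | e v u]| else 0.

Definition is_graph_cycle (V : {set T}) (c : seq T) : bool :=
  [&& 3 <= size c, uniq c, all (fun y => y \in V) c & cycle e c].

Definition has_cycle (V : {set T}) : Prop := exists c, is_graph_cycle V c.

Definition Frel (V F : {set T}) : rel T :=
  fun a b => [&& a \in F :&: V, b \in F :&: V & e a b].

Definition two_nbrs_same_comp (V F : {set T}) (v : T) : Prop :=
  exists u1 u2, [/\ u1 != u2, u1 \in F :&: V, u2 \in F :&: V,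
                    e v u1 && e v u2 & connect (Frel V F) u1 u2].

Definition stop0 (s : state T) : bool := (sk s < 0)%R || (sV s == set0).

Definition step1_applies (s : state T) : Prop :=
  exists v, v \in sV s /\ deg (sV s) v < 2.

Definition step2_applies (s : state T) : Prop :=
  exists v, v \in sV s :\: sF s /\ two_nbrs_same_comp (sV s) (sF s) v.

Definition is_maxdeg (s : state T) (v : T) : Prop :=
  v \in sV s :\: sF s /\
  forall w, w \in sV s :\: sF s -> deg (sV s) w <= deg (sV s) v.

Definition reaches_step3 (s : state T) : Prop :=
  ~~ stop0 s /\ ~ step1_applies s /\ ~ step2_applies s.

Definition apply_event (s : state T) (ev : event T) : state T :=
  match ev with
  | Ev1 v => State (sV s :\ v) (sk s) (sF s :\ v)
  | Ev2 v => State (sV s :\ v) (sk s - 1)%R (sF s)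
  | Ev5 v => State (sV s :\ v) (sk s - 1)%R (sF s)
  | Ev6 v => State (sV s) (sk s) (v |: sF s)
  | EvL v => State (sV s :\ v) (sk s) (sF s)
  end.

(* the recursive call represented by ev is made by the call with arguments s *)
Definition valid_rec_event (s : state T) (ev : event T) : Prop :=
  match ev with
  | Ev1 v => ~~ stop0 s /\ v \in sV s /\ deg (sV s) v < 2
  | Ev2 v => [/\ ~~ stop0 s, ~ step1_applies s, v \in sV s :\: sF s
              & two_nbrs_same_comp (sV s) (sF s) v]
  | Ev5 v => [/\ reaches_step3 s, is_maxdeg s v & deg (sV s) v <> 2]
  | Ev6 v => [/\ reaches_step3 s, is_maxdeg s v & deg (sV s) v <> 2]
  | EvL _ => False
  end.

Fixpoint valid_rec (s : state T) (ls : seq (event T)) : Prop :=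
  match ls with
  | [::] => True
  | ev :: ls' => valid_rec_event s ev /\ valid_rec (apply_event s ev) ls'
  end.

(* the loop of step 4: while G contains a cycle C, delete a vertex of C \ F *)
Fixpoint valid_loop (V F : {set T}) (xs : seq T) : Prop :=
  match xs with
  | [::] => ~ has_cycle V
  | x :: xs' => [/\ x \notin F,
                   (exists c, is_graph_cycle V c /\ x \in c)
                 & valid_loop (V :\ x) F xs']
  end.

Definition step4_applies (s : state T) : Prop :=
  reaches_step3 s /\ exists v, is_maxdeg s v /\ deg (sV s) v = 2.

Definition init_state (V0 : {set T}) (k0 : int) : state T := State V0 k0 set0.

(* An execution path of naive-fvs(G,k0,emptyset), G = (V0,e), given by its
   recursive-call events ls and its terminal call t, leading to a solution. *)
Definition leads_to_solution (V0 : {set T}) (k0 : int)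
    (ls : seq (event T)) (t : terminal T) : Prop :=
  valid_rec (init_state V0 k0) ls /\
  let sf := foldl apply_event (init_state V0 k0) ls in
  match t with
  | Term0 => stop0 sf /\ (0 <= sk sf)%R
  | Term4 xs => [/\ step4_applies sf, valid_loop (sV sf) (sF sf) xs
                  & ((size xs)%:Z <= sk sf)%R]
  end.

Definition all_events (ls : seq (event T)) (t : terminal T) : seq (event T) :=
  ls ++ (if t is Term4 xs then map (@EvL T) xs else [::]).

(* states: the j-th entry is the current (G,k,F) just before event j;
   the last entry (index size evs) is the state at the end of the path *)
Definition path_states (s0 : state T) (evs : seq (event T)) : seq (state T) :=
  s0 :: scanl apply_event s0 evs.

(* V_- in deletion order: pairs (event index, deleted vertex) *)
Definition minus_list (evs : seq (event T)) : seq (nat * T) :=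
  pmap (fun p : nat * event T =>
          match p.2 with
          | Ev2 v | Ev5 v | EvL v => Some (p.1, v)
          | _ => None
          end) (zip (iota 0 (size evs)) evs).

Definition Fprime (evs : seq (event T)) : {set T} :=
  [set v | has (fun ev => if ev is Ev6 w then w == v else false) evs].

(* effective decrements of u between states Gi (before x_i deleted) and
   Gnext (before x_{i+1} deleted, or end of path) *)
Definition delta (Gi Gnext : state T) (u : T) : int :=
  if u \in sF Gi then
    ((maxn (deg (sV Gi) u) 2)%:Z - (maxn (deg (sV Gnext) u) 2)%:Z)%R
  else 0%R.

End FVS.

From HB Require Import structures.
From mathcomp Require Import all_boot all_order all_algebra.
From mathcomp Require Import zify.
Import Order.TTheory GRing.Theory Num.Theory.
Set Implicit Arguments. Unset Strict Implicit. Unset Printing Implicit Defensive.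

(* Fix x = x_i and measure a vertex set V by W(V) = sum_{u <> x} max(d_V(u), 2)
   together with L(V), the number of vertices u <> x of V with d_V(u) < 2.
   Every effective decrement of some u in F_i is a unit of decrease of W between
   G_i and G_{i+1}, so it suffices to show W(G_i) - W(G_{i+1}) <= d*(x_i).
   Deleting x costs W at most d(x) (each neighbour loses one degree).  Between
   x_i and x_{i+1} the path only deletes vertices of degree < 2 (step 1) or
   enlarges F (step 6); a deleted vertex has degree 0 and so keeps weight 2,
   and deleting a vertex of degree <= 1 lowers W by at most one while removing
   it from L, so W - L never decreases.  Finally L(G_i) <= L(G_{i+1}): in
   steps 2 and 5 no vertex has degree < 2, and after a deletion in the final
   loop of step 4 nothing but loop deletions follow. *)

Section Degrees.
Variables (T : finType) (e : rel T).

Lemma deg_notin (V : {set T}) u : u \notin V -> deg e V u = 0.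
Proof. by rewrite /deg => /negbTE ->. Qed.

Lemma deg_sum (V : {set T}) v : v \in V -> deg e V v = \sum_u ((u \in V) && e v u : nat).
Proof.
move=> vV; rewrite /deg vV -sum1_card [LHS]big_mkcond /=.
by apply: eq_bigr => u _; rewrite inE; case: (_ && _).
Qed.

Lemma deg_setD1 (V : {set T}) v u : u != v ->
  deg e (V :\ v) u = deg e V u - ((u \in V) && (v \in V) && e u v).
Proof.
move=> uv; rewrite /deg !inE uv /=; case uV: (u \in V) => //=.
have -> : [set w in V :\ v | e u w] = [set w in V | e u w] :\ v.
  by apply/setP => w; rewrite !inE andbA.
rewrite [in RHS](cardsD1 v [set w in V | e u w]) !inE.
by case: (v \in V) (e u v) => [] [] /=; lia.
Qed.

Lemma deg_subset (V W : {set T}) u : W \subset V -> deg e W u <= deg e V u.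
Proof.
move=> sWV; rewrite /deg; case uW: (u \in W) => //.
rewrite (subsetP sWV _ uW); apply: subset_leq_card; apply/subsetP => w.
by rewrite !inE => /andP[/(subsetP sWV) -> ->].
Qed.

End Degrees.

Section Potential.
Variables (T : finType) (e : rel T) (x : T).
Hypotheses (e_sym : symmetric e) (e_irr : irreflexive e).

Definition weight_sum (V : {set T}) : nat := \sum_(u | u != x) maxn (deg e V u) 2.

Definition low_count (V : {set T}) : nat :=
  \sum_(u | u != x) ((u \in V) && (deg e V u < 2) : nat).

Lemma potential_setD1_at (V : {set T}) v u : u != x -> v \in V ->
    (v == x) || (deg e V v < 2) ->
  maxn (deg e V u) 2 + ((u \in V :\ v) && (deg e (V :\ v) u < 2)) + (u == v)
  <= maxn (deg e (V :\ v) u) 2 + ((u \in V) && (deg e V u < 2)) + ((u \in V) && e v u).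
Proof.
move=> ux vV; have [Euv | uv] := eqVneq u v.
  subst v; rewrite (negbTE ux) /= => vlow.
  by rewrite !inE eqxx vV e_irr (@deg_notin _ _ (V :\ u)) ?inE ?eqxx //= vlow; lia.
move=> _; rewrite deg_setD1 // !inE uv vV [e v u]e_sym /=.
case uV: (u \in V) => /=; first by case: (e u v) => /=; lia.
by rewrite deg_notin ?uV.
Qed.

Lemma potential_setD1 (V : {set T}) v : v \in V -> (v == x) || (deg e V v < 2) ->
  weight_sum V + low_count (V :\ v) + (v != x)
  <= weight_sum (V :\ v) + low_count V + deg e V v.
Proof.
move=> vV vlow.
have -> : (v != x : nat) = \sum_(u | u != x) (u == v : nat).
  have [-> | vx] := eqVneq v x; first by rewrite big1 // => u /negbTE ->.
  by rewrite (bigD1 v) //= eqxx big1 // => u /andP[_ /negbTE ->].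
rewrite /weight_sum /low_count -!big_split /=.
apply: (leq_trans (leq_sum _ (fun u (ux : u != x) => potential_setD1_at ux vV vlow))).
rewrite big_split /= leq_add2l (deg_sum _ vV) [X in _ <= X](bigID (fun u => u != x)) /=.
exact: leq_addr.
Qed.

Lemma low_count_setD1 (V : {set T}) : low_count V <= low_count (V :\ x).
Proof.
apply: leq_sum => u ux; rewrite !inE ux /=; case uV: (u \in V) => //=.
by case: ltnP => //= low; rewrite (leq_ltn_trans (deg_subset e u (subD1set V x)) low).
Qed.

Lemma low_count0 (V : {set T}) : (forall w, w \in V -> 1 < deg e V w) -> low_count V = 0.
Proof.
move=> Vhigh; apply: big1 => u _; case uV: (u \in V) => //=.
by rewrite ltnNge (Vhigh u uV).
Qed.

End Potential.

Lemma all_predC_take_find (U : Type) (p : pred U) s : all (predC p) (take (find p s) s).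
Proof. by elim: s => [|a s IH] //=; case: ifP => //= ->. Qed.

Section Paths.
Variables (T : finType) (e : rel T).
Hypotheses (e_sym : symmetric e) (e_irr : irreflexive e).

Definition minus_of (ev : event T) : option T :=
  match ev with Ev2 v | Ev5 v | EvL v => Some v | _ => None end.

Definition is_minus (ev : event T) : bool := isSome (minus_of ev).

Definition is_EvL (ev : event T) : bool := if ev is EvL _ then true else false.

(* The facts about each event that the counting argument uses; unlike [valid_rec]
   it also covers the loop of step 4.  [rest] is the part of the path after [ev]. *)
Definition legal_event (s : state T) (ev : event T) (rest : seq (event T)) : Prop :=
  match ev with
  | Ev1 v => v \in sV s /\ deg e (sV s) v < 2
  | Ev2 v | Ev5 v =>
      v \in sV s :\: sF s /\ (forall w, w \in sV s -> 1 < deg e (sV s) w)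
  | Ev6 _ => True
  | EvL v => v \in sV s :\: sF s /\ all is_EvL rest
  end.

Fixpoint legal_path (s : state T) (evs : seq (event T)) : Prop :=
  if evs is ev :: rest then legal_event s ev rest /\ legal_path (apply_event s ev) rest
  else True.

Lemma legal_path_catr (s : state T) pre post :
  legal_path s (pre ++ post) -> legal_path (foldl (@apply_event T) s pre) post.
Proof. by elim: pre s => [|ev pre IH] s //= [_ /IH]. Qed.

Lemma no_low_vertex (s : state T) :
  ~ step1_applies e s -> forall w, w \in sV s -> 1 < deg e (sV s) w.
Proof. by move=> no1 w wV; rewrite ltnNge; apply/negP => low; apply: no1; exists w. Qed.

Lemma legal_of_valid_rec_event (s : state T) ev rest :
  valid_rec_event e s ev -> legal_event s ev rest.
Proof.
case: ev => v //=; first by case=> _ [].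
- by case=> _ /no_low_vertex.
- by case=> [[_ [/no_low_vertex ? _]] [? _] _].
Qed.

Lemma legal_path_cat (s : state T) ls post : valid_rec e s ls ->
  legal_path (foldl (@apply_event T) s ls) post -> legal_path s (ls ++ post).
Proof.
elim: ls s => [|ev ls IH] s //= [valid_ev valid_ls] legal_post.
by split; [exact: legal_of_valid_rec_event | exact: IH].
Qed.

Lemma legal_loop (V F : {set T}) k xs :
  valid_loop e V F xs -> legal_path (State V k F) (map (@EvL T) xs).
Proof.
elim: xs V => [|y xs IH] V //= [yF [c [/and4P[_ _ /allP cV _] yc]] loop].
by do 2?split; [rewrite inE yF cV | rewrite all_map; apply/allP | exact: IH].
Qed.

Lemma legal_path_of_solution (V0 : {set T}) k0 ls t :
  leads_to_solution e V0 k0 ls t -> legal_path (init_state V0 k0) (all_events ls t).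
Proof.
case=> valid_ls terminal_ok; apply: legal_path_cat valid_ls _.
case: t terminal_ok => [|xs] //= [_ loop _]; move: loop.
by case: (foldl _ _ ls) => V k F; exact: legal_loop.
Qed.

Lemma sV_apply_event_subset (s : state T) ev : sV (apply_event s ev) \subset sV s.
Proof. by case: ev => v; rewrite /= ?subD1set. Qed.

Lemma sV_foldl_subset (s : state T) evs : sV (foldl (@apply_event T) s evs) \subset sV s.
Proof.
elim: evs s => [|ev evs IH] s //=.
exact: subset_trans (IH _) (sV_apply_event_subset s ev).
Qed.

Lemma sV_apply_minus (s : state T) ev x :
  minus_of ev = Some x -> sV (apply_event s ev) = sV s :\ x.
Proof. by case: ev => v //= [->]. Qed.

Lemma weight_sum_peel x (s : state T) mid post :
  legal_path s (mid ++ post) -> all (predC is_minus) mid -> x \notin sV s ->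
  weight_sum e x (sV s) + low_count e x (sV (foldl (@apply_event T) s mid))
  <= weight_sum e x (sV (foldl (@apply_event T) s mid)) + low_count e x (sV s).
Proof.
elim: mid s => [|ev mid IH] s /=; first by move=> *; rewrite addnC.
case=> legal_ev legal_rest /andP[ev_plain mid_plain] xV.
have xV' : x \notin sV (apply_event s ev).
  by apply: contra xV; apply/subsetP/sV_apply_event_subset.
move: (IH _ legal_rest mid_plain xV') => {legal_rest xV'} peel_rest.
case: ev legal_ev ev_plain peel_rest => v //= [vV vlow] _ peel_rest.
have vx : v != x by apply: contraNneq xV => <-.
have vlow' : (v == x) || (deg e (sV s) v < 2) by rewrite vlow orbT.
by have := potential_setD1 e_sym e_irr vV vlow'; rewrite vx; lia.
Qed.

Lemma legal_minus_event (s : state T) ev rest x :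
  legal_event s ev rest -> minus_of ev = Some x ->
  x \in sV s :\: sF s /\ ((forall w, w \in sV s -> 1 < deg e (sV s) w) \/ all is_EvL rest).
Proof. by case: ev => v //= [vVF rest_ok] [<-]; split => //; first [by left | by right]. Qed.

Lemma weight_sum_window (s : state T) ev mid post x :
  legal_path s (ev :: mid ++ post) -> minus_of ev = Some x -> all (predC is_minus) mid ->
  weight_sum e x (sV s)
  <= weight_sum e x (sV (foldl (@apply_event T) s (ev :: mid))) + deg e (sV s) x.
Proof.
move=> [legal_ev legal_rest] evx mid_plain; set s' := foldl _ s _.
have [xVF Vhigh_or_loop] := legal_minus_event legal_ev evx.
have xV : x \in sV s by case/setDP: xVF.
have Es1 := sV_apply_minus s evx.
have xV1 : x \notin sV (apply_event s ev) by rewrite Es1 setD11.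
have peel := weight_sum_peel legal_rest mid_plain xV1.
have centre := potential_setD1 e_sym e_irr xV (introT orP (or_introl (eqxx x))).
have low_le : low_count e x (sV s) <= low_count e x (sV s').
  case: Vhigh_or_loop => [Vhigh | loop]; first by rewrite low_count0.
  have mid0 : mid = [::] by move: mid_plain loop; case: (mid) => [|[]].
  have -> : s' = apply_event s ev by rewrite /s' mid0.
  by rewrite Es1; exact: low_count_setD1.
rewrite Es1 in peel; rewrite eqxx /= in centre; rewrite /s' /= in low_le *; lia.
Qed.

Lemma sum_delta_le (A : {set T}) (s s' : state T) x :
  x \notin sF s -> sV s' \subset sV s ->
  (\sum_(u in A) delta e s s' u
     <= (weight_sum e x (sV s))%:Z - (weight_sum e x (sV s'))%:Z)%R.
Proof.
move=> xF sub; rewrite /weight_sum !(big_morph Posz PoszD (erefl (Posz 0))) -sumrB.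
rewrite [leRHS]big_mkcond [leLHS]big_mkcond /=; apply: ler_sum => u _.
have weight_le : maxn (deg e (sV s') u) 2 <= maxn (deg e (sV s) u) 2.
  by have := deg_subset e u sub; lia.
rewrite /delta; have [-> | ux] := eqVneq u x; first by rewrite (negbTE xF); case: (x \in A).
by case: (u \in A); case: (u \in sF s) => /=; lia.
Qed.

Lemma sum_delta_window (A : {set T}) (s : state T) ev mid post x :
  legal_path s (ev :: mid ++ post) -> minus_of ev = Some x -> all (predC is_minus) mid ->
  (\sum_(u in A) delta e s (foldl (@apply_event T) s (ev :: mid)) u
     <= (deg e (sV s) x)%:Z)%R.
Proof.
move=> legal evx mid_plain.
have [/setDP[_ xF] _] := legal_minus_event legal.1 evx.
apply: le_trans (sum_delta_le _ xF (sV_foldl_subset _ _)) _.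
have := weight_sum_window legal evx mid_plain; lia.
Qed.

Definition minus_from (n : nat) (evs : seq (event T)) : seq (nat * T) :=
  pmap (fun p => omap (pair p.1) (minus_of p.2)) (zip (iota n (size evs)) evs).

Lemma minus_listE evs : minus_list evs = minus_from 0 evs.
Proof. by apply: eq_pmap => -[? []]. Qed.

Lemma minus_from_cons n ev evs : minus_from n (ev :: evs) =
  if minus_of ev is Some v then (n, v) :: minus_from n.+1 evs else minus_from n.+1 evs.
Proof. by case: ev. Qed.

Lemma onth_minus_from n evs i j x : onth (minus_from n evs) i = Some (j, x) ->
  exists pre ev rest, [/\ evs = pre ++ ev :: rest, j = n + size pre,
    minus_of ev = Some x & onth (minus_from n evs) i.+1 = onth (minus_from j.+1 rest) 0].
Proof.
elim: evs n i => [|a evs IH] n i; first by rewrite /minus_from /= onth0n.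
rewrite minus_from_cons.
have shift i' : onth (minus_from n.+1 evs) i' = Some (j, x) ->
    exists pre ev rest, [/\ a :: evs = pre ++ ev :: rest, j = n + size pre,
      minus_of ev = Some x & onth (minus_from n.+1 evs) i'.+1 = onth (minus_from j.+1 rest) 0].
  move=> /IH[pre [ev [rest [-> -> evx next]]]].
  by exists (a :: pre), ev, rest; split; rewrite //= addSnnS.
case av: (minus_of a) => [v|]; last exact: shift.
case: i => [|i] /=; last exact: shift.
by case=> <- <-; exists [::], a, evs; rewrite addn0.
Qed.

Lemma first_minus_index m evs :
  (if onth (minus_from m evs) 0 is Some (j, _) then j else m + size evs)
  = m + find is_minus evs.
Proof.
elim: evs m => [|a evs IH] m /=; first by rewrite /minus_from.
rewrite minus_from_cons; have := IH m.+1.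
by case: a => v /=; case: (minus_from m.+1 evs) => [|[j y] r] /=; lia.
Qed.

Lemma nth_path_states s0 d evs k : k <= size evs ->
  nth d (path_states s0 evs) k = foldl (@apply_event T) s0 (take k evs).
Proof. by rewrite /path_states; elim: evs s0 k => [|a evs IH] s0 [|k] //= /IH. Qed.

End Paths.

Theorem mainTheorem5 (T : finType) (e : rel T)
  (e_sym : symmetric e) (e_irr : irreflexive e)
  (V0 : {set T}) (k0 : int) (ls : seq (event T)) (t : terminal T) :
  leads_to_solution e V0 k0 ls t ->
  let evs := all_events ls t in
  let sts := path_states (init_state V0 k0) evs in
  let mins := minus_list evs in
  forall (i j : nat) (x : T),
    onth mins i = Some (j, x) ->
    let Gi := nth (init_state V0 k0) sts j in
    let jnext := if onth mins i.+1 is Some (j', _) then j' else size evs in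
    let Gnext := nth (init_state V0 k0) sts jnext in
    (\sum_(u in Fprime evs) delta e Gi Gnext u <= (deg e (sV Gi) x)%:Z)%R.
Proof.
move=> /legal_path_of_solution legal evs sts mins i j x.
rewrite /mins minus_listE => /onth_minus_from[pre [ev [rest [Eevs -> evx ->]]]] /=.
have -> : size evs = (0 + size pre).+1 + size rest by rewrite Eevs size_cat /= addnS.
rewrite first_minus_index !add0n.
set mid := take (find (@is_minus T) rest) rest.
rewrite -(cat_take_drop (find (@is_minus T) rest) rest) -/mid in Eevs.
have -> : nth (init_state V0 k0) sts (size pre) = foldl (@apply_event T) (init_state V0 k0) pre.
  by rewrite /sts nth_path_states Eevs ?take_size_cat // size_cat leq_addr.
have -> : nth (init_state V0 k0) sts ((size pre).+1 + find (@is_minus T) rest)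
          = foldl (@apply_event T) (init_state V0 k0) (pre ++ ev :: mid).
  rewrite /sts nth_path_states Eevs.
    by rewrite -cat_cons catA take_size_cat // size_cat /= size_takel ?find_size // addnS.
  by rewrite !size_cat /= size_cat size_takel ?find_size //; lia.
move: legal; rewrite -/evs Eevs foldl_cat => /legal_path_catr legal.
apply: (sum_delta_window e_sym e_irr _ legal evx); exact: all_predC_take_find.
Qed.
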